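(* Let $G=(V,E)$ be a directed graph, $s\neq t$ vertices and $k\ge 5$ an integer, and let $e(u,v)$ be an undetermined edge. Then $e(u,v)$ is an edge of $SPG_k(s,t)$ if and only if there exist an integer $l$ and vertices $v_2,v_3,\dots,v_{l-2}$ forming a simple path $q^*$ in $G$ of length $l-4\le k-4$ having $e(u,v)$ as one of its edges, such that (1) $v_2\in D$ and $v_{l-2}\in A$; and (2) there exist $v_1\in In_D(v_2)$ and $v_{l-1}\in Out_A(v_{l-2})$ such that the vertices $s,v_1,v_2,\dots,v_{l-1},t$ are pairwise distinct.
   Context: A path from $x$ to $y$ in $G$ is a vertex sequence $x=v_0,\dots,v_m=y$ with $(v_{i-1},v_i)\in E$; its length is $m$ and $V(p)$, $E(p)$ are its vertex and edge sets. A simple path has no repeated vertex. $SPG_k(s,t)$ is the subgraph of $G$ formed by the union of vertex sets and edge sets of all simple paths from $s$ to $t$ of length at most $k$. For a vertex $u$ and integer $l\ge 0$, $EV^*_l(s,u)$ exists iff there is at least one simple path from $s$ to $u$ of length at most $l$ not containing $t$, and then $EV^*_l(s,u)$ is the intersection of $V(p)$ over all such paths. Symmetrically, $EV^*_l(v,t)$ exists iff there is at least one simple path from $v$ to $t$ of length at most $l$ not containing $s$, and then it is the intersection of $V(p)$ over all such paths. The upper-bound graph $SPG^u_k(s,t)$ is the subgraph of $G$ whose edges are exactly those $e(u,v)\in E$ for which there exist integers $k_f,k_b\ge 0$ with $EV^*_{k_f}(s,u)$ and $EV^*_{k_b}(v,t)$ existing, $k_f+1+k_b\le k$, and $EV^*_{k_f}(s,u)\cap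 EV^*_{k_b}(v,t)=\emptyset$. An edge $e(u,v)\in E$ is definite if one of: (a) $u=s$ and $EV^*_{k-1}(v,t)$ exists; (b) $v=t$ and $EV^*_{k-1}(s,u)$ exists; (c) $EV^*_1(s,u)$ and $EV^*_{k-2}(v,t)$ exist and $u\notin EV^*_{k-2}(v,t)$; (d) $EV^*_1(v,t)$ and $EV^*_{k-2}(s,u)$ exist and $v\notin EV^*_{k-2}(s,u)$. An undetermined edge is an edge of $SPG^u_k(s,t)$ that is not definite. The departure set $D$ consists of vertices $w$ having an in-neighbour $x$ such that $x,w,s,t$ are pairwise distinct and $e(s,x),e(x,w)$ are edges of $SPG^u_k(s,t)$; for $w\in D$, $In_D(w)$ is the set of all such $x$. The arrival set $A$ consists of vertices $w$ having an out-neighbour $y$ such that $w,y,s,t$ are pairwise distinct and $e(w,y),e(y,t)$ are edges of $SPG^u_k(s,t)$; for $w\in A$, $Out_A(w)$ is the set of all such $y$. *)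

From mathcomp Require Import all_boot.
Set Implicit Arguments. Unset Strict Implicit. Unset Printing Implicit Defensive.

Section Defs.
Variables (T : finType) (E : rel T).

(* A path x = v_0, ..., v_m = y is represented by x together with the
   sequence p = [:: v_1; ...; v_m]; its length is size p and its vertex set
   is x :: p.  [spath x y p] : p is a simple path from x to y. *)
Definition spath (x y : T) (p : seq T) : bool :=
  [&& path E x p, last x p == y & uniq (x :: p)].

Definition path_has_edge (x : T) (p : seq T) (u v : T) : Prop :=
  exists p1 p2, x :: p = p1 ++ u :: v :: p2.

Definition SPG_edge (k : nat) (s t u v : T) : Prop :=
  exists p, [/\ spath s t p, size p <= k & path_has_edge s p u v].

Definition EVf_ex (l : nat) (s t u : T) : Prop :=
  exists p, [/\ spath s u p, size p <= l & t \notin s :: p].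
(* w \in EV*_l(s,u) (meaningful when EV*_l(s,u) exists) *)
Definition in_EVf (l : nat) (s t u w : T) : Prop :=
  forall p, spath s u p -> size p <= l -> t \notin s :: p -> w \in s :: p.

Definition EVb_ex (l : nat) (s t v : T) : Prop :=
  exists p, [/\ spath v t p, size p <= l & s \notin v :: p].
Definition in_EVb (l : nat) (s t v w : T) : Prop :=
  forall p, spath v t p -> size p <= l -> s \notin v :: p -> w \in v :: p.

Definition SPGu_edge (k : nat) (s t u v : T) : Prop :=
  E u v /\
  exists kf kb, [/\ EVf_ex kf s t u, EVb_ex kb s t v, kf + 1 + kb <= k &
    forall w, ~ (in_EVf kf s t u w /\ in_EVb kb s t v w)].

Definition definite_edge (k : nat) (s t u v : T) : Prop :=
  E u v /\
  [\/ u = s /\ EVb_ex k.-1 s t v,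
      v = t /\ EVf_ex k.-1 s t u,
      [/\ EVf_ex 1 s t u, EVb_ex (k - 2) s t v & ~ in_EVb (k - 2) s t v u]
    | [/\ EVb_ex 1 s t v, EVf_ex (k - 2) s t u & ~ in_EVf (k - 2) s t u v]].

Definition undetermined_edge (k : nat) (s t u v : T) : Prop :=
  SPGu_edge k s t u v /\ ~ definite_edge k s t u v.

Definition In_D (k : nat) (s t w x : T) : Prop :=
  [/\ uniq [:: x; w; s; t], SPGu_edge k s t s x & SPGu_edge k s t x w].
Definition in_D (k : nat) (s t w : T) : Prop := exists x, In_D k s t w x.

Definition Out_A (k : nat) (s t w y : T) : Prop :=
  [/\ uniq [:: w; y; s; t], SPGu_edge k s t w y & SPGu_edge k s t y t].
Definition in_A (k : nat) (s t w : T) : Prop := exists y, Out_A k s t w y.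

End Defs.

From mathcomp Require Import all_boot zify.
Set Implicit Arguments. Unset Strict Implicit. Unset Printing Implicit Defensive.

(* An edge of a simple s-t path of length at most k is an edge of SPG^u_k:
   the parts of the path before and after it witness EV*_kf(s,u) and
   EV*_kb(v,t), and they are disjoint.  On such a path an undetermined edge
   can be neither among the first two nor among the last two edges, because
   each of these positions makes it definite by one of the clauses (a)-(d).
   Hence the path reads s, v1, v2, ..., v_(l-2), v_(l-1), t with the edge
   inside v2 ... v_(l-2), and its four outer edges exhibit v1 in In_D(v2) and
   v_(l-1) in Out_A(v_(l-2)).  Conversely, such a configuration is itself a
   simple s-t path of length at most k through the edge. *)

Section SimplePaths.
Variables (T : finType) (E : rel T).

Lemma spath_nil x y : spath E x y [::] = (x == y).
Proof. by rewrite /spath /= andbT. Qed.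

Lemma spath_cons x y z p :
  spath E x y (z :: p) = [&& E x z, x \notin z :: p & spath E z y p].
Proof. by rewrite /spath /= -!andbA; do !bool_congr. Qed.

Lemma spath_last x y p : spath E x y p -> last x p = y.
Proof. by case/and3P=> _ /eqP. Qed.

Lemma spath_cat x y p1 p2 :
  spath E x y (p1 ++ p2) =
  [&& spath E x (last x p1) p1, spath E (last x p1) y p2 & [disjoint x :: p1 & p2]].
Proof.
rewrite /spath cat_path last_cat -cat_cons cat_uniq eqxx disjoint_sym disjoint_has /=.
case: (boolP (has _ _)) => [|/hasPn disj]; first by rewrite !andbF.
have -> : last x p1 \notin p2 by apply/negP => /disj; rewrite mem_last.
case: (path E x p1); case: (x \in p1); case: (uniq p1); by rewrite /= ?andbF ?andbT.
Qed.

Lemma spath_mem_last x y p : spath E x y p -> y \in x :: p.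
Proof. by move/spath_last <-; exact: mem_last. Qed.

End SimplePaths.

Section EdgeClassification.
Variables (T : finType) (E : rel T) (k : nat) (s t : T).

Lemma SPGu_edge_of_spath p1 v p2 :
  spath E s t (p1 ++ v :: p2) -> size p1 + size p2 < k ->
  SPGu_edge E k s t (last s p1) v.
Proof.
rewrite spath_cat spath_cons => /and3P[sp1 /and3P[Euv _ sp2] disj] ltk.
have t_notin : t \notin s :: p1 by rewrite (disjointFl disj) // (spath_mem_last sp2).
have s_notin : s \notin v :: p2 by rewrite (disjointFr disj) // mem_head.
split=> //; exists (size p1), (size p2); split.
- by exists p1.
- by exists p2.
- by rewrite addn1.
move=> w [/(_ p1 sp1 (leqnn _) t_notin) ws /(_ p2 sp2 (leqnn _) s_notin)].
by rewrite (disjointFr disj ws).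
Qed.

Lemma definite_edge_first v p :
  spath E s t (v :: p) -> size p < k -> definite_edge E k s t s v.
Proof.
rewrite spath_cons => /and3P[Esv s_notin sp] ltk.
by split=> //; constructor 1; split=> //; exists p; split=> //; lia.
Qed.

Lemma definite_edge_second u v p :
  spath E s t (u :: v :: p) -> size p <= k - 2 -> definite_edge E k s t u v.
Proof.
rewrite !spath_cons inE negb_or => /and3P[Esu /andP[s_ne_u s_notin]].
move=> /and3P[Euv u_notin sp] lek; have t_in := spath_mem_last sp.
split=> //; constructor 3; split.
- exists [:: u]; split=> //.
    by rewrite spath_cons Esu mem_seq1 s_ne_u spath_nil eqxx.
  rewrite !inE; apply/norP; split.
  + by apply: contraNneq _ s_notin => <-.
  + by apply: contraNneq _ u_notin => <-.
- by exists p.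
- by move/(_ p sp lek s_notin); apply/negP.
Qed.

Lemma definite_edge_last p u v :
  spath E s t (p ++ [:: u; v]) -> size p + 2 <= k -> definite_edge E k s t u v.
Proof.
rewrite -cat_rcons spath_cat last_rcons spath_cons spath_nil.
move=> /and3P[sp /and3P[Euv _ /eqP vt] disj] lek; subst v.
split=> //; constructor 2; split=> //; exists (rcons p u); split=> //.
- by rewrite size_rcons; lia.
- by rewrite (disjointFl disj) ?mem_head.
Qed.

Lemma definite_edge_penultimate p u v w :
  spath E s t (p ++ [:: u; v; w]) -> size p + 3 <= k ->
  definite_edge E k s t u v.
Proof.
rewrite -cat_rcons spath_cat last_rcons !spath_cons spath_nil.
move=> /and3P[sp /and3P[Euv _ /and3P[Evw v_notin /eqP wt]] disj] lek; subst w.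
have t_notin : t \notin s :: rcons p u by rewrite (disjointFl disj) // !inE eqxx orbT.
have lek2 : size (rcons p u) <= k - 2 by rewrite size_rcons; lia.
split=> //; constructor 4; split.
- exists [:: t]; split=> //; first by rewrite spath_cons Evw v_notin spath_nil eqxx.
  by rewrite (disjointFr disj (mem_head _ _)).
- by exists (rcons p u).
- by move/(_ (rcons p u) sp lek2 t_notin); rewrite (disjointFl disj (mem_head _ _)).
Qed.

Lemma nondefinite_edge_inner p a u v b :
  spath E s t p -> size p <= k -> s :: p = a ++ u :: v :: b ->
  ~ definite_edge E k s t u v ->
  exists a1 v2 q y, p = a1 :: v2 :: q ++ [:: y; t] /\ path_has_edge v2 q u v.
Proof.
move=> sp lek def_p not_def.
case: a def_p => [|s' [|a1 a]] [def_s def_p]; subst p.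
- by case: not_def; rewrite -def_s; apply: definite_edge_first sp _; move: lek => /=; lia.
- by case: not_def; apply: definite_edge_second sp _; move: lek => /=; lia.
case/lastP: b sp lek => [|b z] sp lek.
  case: not_def; apply: (definite_edge_last (p := a1 :: a)) sp _.
  by move: lek; rewrite /= size_cat /=; lia.
case/lastP: b sp lek => [|b y] sp lek.
  case: not_def; apply: (definite_edge_penultimate (p := a1 :: a)) sp _.
  by move: lek; rewrite /= size_cat /=; lia.
have zt : z = t by rewrite -(spath_last sp) /= last_cat /= last_rcons.
case def_q: (a ++ u :: v :: b) => [|v2 q]; first by case: a {sp lek} def_q.
exists a1, v2, q, y; split; last by exists a, b.
by rewrite -zt; congr (_ :: _); rewrite -cat_cons -def_q -!cats1 -!catA.
Qed.

Lemma In_D_of_spath x w p :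
  spath E s t (x :: w :: p ++ [:: t]) -> size p + 3 <= k -> In_D E k s t w x.
Proof.
move=> sp lek; split.
- rewrite (uniq_catCA [:: x; w] [:: s] [:: t]).
  apply: subseq_uniq (cat_subseq (subseq_refl [:: s; x; w]) (suffix_subseq p [:: t])) _.
  by case/and3P: sp.
- by apply: (@SPGu_edge_of_spath [::]) sp _; rewrite /= size_cat /=; lia.
- by apply: (@SPGu_edge_of_spath [:: x]) sp _; rewrite /= size_cat /=; lia.
Qed.

Lemma Out_A_of_spath p w y :
  spath E s t (p ++ [:: w; y; t]) -> size p + 3 <= k -> Out_A E k s t w y.
Proof.
move=> sp lek; split.
- rewrite (uniq_catCA [:: w; y] [:: s] [:: t]).
  apply: subseq_uniq (cat_subseq (subseq_refl [:: s]) (suffix_subseq p [:: w; y; t])) _.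
  by case/and3P: sp.
- have := @SPGu_edge_of_spath (rcons p w) y [:: t].
  by rewrite last_rcons cat_rcons size_rcons; apply=> //=; lia.
- have := @SPGu_edge_of_spath (p ++ [:: w; y]) t [::].
  by rewrite -catA last_cat size_cat; apply=> //=; lia.
Qed.

End EdgeClassification.

Theorem theorem5p6 (T : finType) (E : rel T) (s t : T) (k : nat) (u v : T) :
  s != t -> 5 <= k -> undetermined_edge E k s t u v ->
  (SPG_edge E k s t u v <->
   exists (v2 : T) (q : seq T),
     [/\ path E v2 q, uniq (v2 :: q), size q <= k - 4,
         path_has_edge v2 q u v &
       [/\ in_D E k s t v2, in_A E k s t (last v2 q) &
         exists v1 vl1, [/\ In_D E k s t v2 v1, Out_A E k s t (last v2 q) vl1 &
           uniq (s :: v1 :: v2 :: q ++ [:: vl1; t])]]]).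
Proof.
move=> _ k_ge5 [_ not_def]; split.
  case=> p [sp lek [a [b def_p]]].
  have [v1 [v2 [q [vl1 [def_p' edge]]]]] :=
    nondefinite_edge_inner sp lek def_p not_def.
  subst p; have lek4 : size q + 4 <= k by move: lek; rewrite /= size_cat /=; lia.
  have inD : In_D E k s t v2 v1.
    by apply: (In_D_of_spath (p := q ++ [:: vl1])); rewrite -?catA ?size_cat //=; lia.
  have outA : Out_A E k s t (last v2 q) vl1.
    apply: (Out_A_of_spath (p := v1 :: belast v2 q)); last by rewrite /= size_belast; lia.
    by rewrite cat_cons -cat_rcons -lastI.
  have [Pq Uq] : path E v2 q /\ uniq (v2 :: q).
    move: sp; rewrite !spath_cons spath_cat => /and3P[_ _ /and3P[_ _ /and3P[]]].
    by case/and3P.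
  exists v2, q; split=> //; first lia.
  split; [by exists v1 | by exists vl1 | exists v1, vl1; split=> //].
  by case/and3P: sp.
case=> v2 [q [Pq Uq lek [a [b def_q]] [_ _ [v1 [vl1 [inD outA U]]]]]].
case: inD => _ [Esv1 _] [Ev1v2 _]; case: outA => _ [Eqvl1 _] [Evl1t _].
exists (v1 :: v2 :: q ++ [:: vl1; t]); split.
- by rewrite /spath U /= Esv1 Ev1v2 cat_path Pq /= Eqvl1 Evl1t last_cat /= eqxx.
- by rewrite /= size_cat /=; lia.
- by exists [:: s, v1 & a], (b ++ [:: vl1; t]); rewrite /= -cat_cons def_q -catA.
Qed.
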